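(* Let $a,b,c\in\mathbb{R}$ with $c\neq 0$, and let $c_{1,2}=-\frac{2}{27}a^3+\frac13 ab\pm\frac{2}{27}\sqrt{(a^2-3b)^3}$ (defined when $b\le a^2/3$; upper sign for $c_1$). The cubic $x^3+ax^2+bx+c$ has three positive real roots (counted with multiplicity) if and only if $a<0$ and either (i) $0<b\le a^2/4$ and $c_2\le c<0$, or (ii) $a^2/4<b\le a^2/3$ and $c_2\le c\le c_1<0$. *)

From HB Require Import structures.
From mathcomp Require Import all_boot all_order all_algebra.
Set Implicit Arguments. Unset Strict Implicit. Unset Printing Implicit Defensive.
Import Order.TTheory GRing.Theory Num.Theory.
Local Open Scope ring_scope.

Definition cubic (R : ringType) (a b c : R) : {poly R} :=
  'X^3 + a%:P * 'X^2 + b%:P * 'X + c%:P.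

(* c_1 (upper sign) and c_2 (lower sign); meaningful when b <= a^2/3. *)
Definition c1 (R : rcfType) (a b : R) : R :=
  - (2 / 27) * a ^+ 3 + (1 / 3) * a * b + (2 / 27) * Num.sqrt ((a ^+ 2 - 3 * b) ^+ 3).
Definition c2 (R : rcfType) (a b : R) : R :=
  - (2 / 27) * a ^+ 3 + (1 / 3) * a * b - (2 / 27) * Num.sqrt ((a ^+ 2 - 3 * b) ^+ 3).

Definition three_pos_roots (R : rcfType) (p : {poly R}) : Prop :=
  exists r1 r2 r3 : R, [/\ 0 < r1, 0 < r2, 0 < r3 &
    p = ('X - r1%:P) * ('X - r2%:P) * ('X - r3%:P)].

From HB Require Import structures.
From mathcomp Require Import all_boot all_order all_algebra.
From mathcomp Require Import ring lra.
Import Order.TTheory GRing.Theory Num.Theory.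
Local Open Scope ring_scope.

(* By Vieta, three positive roots force a < 0 < b, c < 0 and 3b <= a^2, and the
   discriminant of the cubic, which factors as 27 (c1 - c) (c - c2), equals
   ((r1 - r2) (r1 - r3) (r2 - r3))^2 >= 0, so c2 <= c <= c1.  Conversely, the cubic
   takes the values c - c2 >= 0 and c - c1 <= 0 at its critical points
   (-a -+ sqrt (a^2 - 3b)) / 3, hence vanishes at some r between them; the slope
   there is nonpositive, which makes the quadratic cofactor of X - r real-rooted,
   and the sign pattern of the coefficients rules out roots <= 0.  Finally
   c1 c2 = b^2 (4b - a^2) / 27 shows that the two cases of the statement together
   say exactly 0 < b, 3b <= a^2, c < 0 and c2 <= c <= c1. *)

Section Cubic.
Variable R : rcfType.
Implicit Types a b c p q r s u v x : R.

Lemma sqrtrX x n : 0 <= x -> Num.sqrt (x ^+ n) = Num.sqrt x ^+ n.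
Proof.
move=> x_ge0; elim: n => [|n IHn]; first by rewrite !expr0 sqrtr1.
by rewrite !exprS sqrtrM // IHn.
Qed.

Lemma quadratic_vieta u v :
  ('X - u%:P) * ('X - v%:P) = 'X^2 + (- (u + v))%:P * 'X + (u * v)%:P :> {poly R}.
Proof. by rewrite !(polyCN, polyCD, polyCM); ring. Qed.

Lemma quadratic_split p q : 0 <= p ^+ 2 - 4 * q ->
  exists u v, 'X^2 + p%:P * 'X + q%:P = ('X - u%:P) * ('X - v%:P).
Proof.
move=> D_ge0; move: (Num.sqrt _) (sqr_sqrtr D_ge0) => d d2.
exists ((- p - d) / 2), ((- p + d) / 2); rewrite quadratic_vieta.
have -> : q = (p ^+ 2 - d ^+ 2) / 4 by rewrite d2; field.
by congr (_ + _%:P * 'X + _%:P); field.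
Qed.

Lemma horner_cubic a b c x : (cubic a b c).[x] = x ^+ 3 + a * x ^+ 2 + b * x + c.
Proof. by rewrite /cubic !hornerE. Qed.

Lemma cubic_inj a b c a' b' c' :
  cubic a b c = cubic a' b' c' -> [/\ a = a', b = b' & c = c'].
Proof.
move=> E; have coef_cubic i : (cubic a b c)`_i = (cubic a' b' c')`_i by rewrite E.
have := coef_cubic 2%N; have := coef_cubic 1%N; have := coef_cubic 0%N.
by rewrite /cubic !coefE /= !(mulr0, mulr1, addr0, add0r).
Qed.

Lemma cubic_vieta r1 r2 r3 :
  ('X - r1%:P) * ('X - r2%:P) * ('X - r3%:P) =
  cubic (- (r1 + r2 + r3)) (r1 * r2 + r1 * r3 + r2 * r3) (- (r1 * r2 * r3)).
Proof. by rewrite /cubic !(polyCN, polyCD, polyCM); ring. Qed.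

Definition cubic_disc a b c : R :=
  a ^+ 2 * b ^+ 2 - 4 * b ^+ 3 - 4 * a ^+ 3 * c - 27 * c ^+ 2 + 18 * a * b * c.

Lemma cubic_disc_vieta r1 r2 r3 :
  cubic_disc (- (r1 + r2 + r3)) (r1 * r2 + r1 * r3 + r2 * r3) (- (r1 * r2 * r3)) =
  ((r1 - r2) * (r1 - r3) * (r2 - r3)) ^+ 2.
Proof. by rewrite /cubic_disc; ring. Qed.

Lemma c2_le_c1 a b : c2 a b <= c1 a b.
Proof. by rewrite /c1 /c2 lerD2l; have := sqrtr_ge0 ((a ^+ 2 - 3 * b) ^+ 3); lra. Qed.

Lemma cubic_disc_c12 a b c : 3 * b <= a ^+ 2 ->
  cubic_disc a b c = 27 * (c1 a b - c) * (c - c2 a b).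
Proof.
move=> b_le; have disc_ge0 : 0 <= (a ^+ 2 - 3 * b) ^+ 3 by rewrite exprn_ge0 ?subr_ge0.
have := sqr_sqrtr disc_ge0; rewrite /c1 /c2; move: (Num.sqrt _) => S S2.
have -> : 27 * (- (2 / 27) * a ^+ 3 + 1 / 3 * a * b + 2 / 27 * S - c) *
           (c - (- (2 / 27) * a ^+ 3 + 1 / 3 * a * b - 2 / 27 * S)) =
         4 / 27 * S ^+ 2 - 27 * (c + 2 / 27 * a ^+ 3 - 1 / 3 * a * b) ^+ 2 by field.
by rewrite S2 /cubic_disc; field.
Qed.

Lemma c1_mul_c2 a b : 3 * b <= a ^+ 2 -> c1 a b * c2 a b = b ^+ 2 * (4 * b - a ^+ 2) / 27.
Proof.
by move=> /(cubic_disc_c12 a b 0); rewrite /cubic_disc => E; lra.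
Qed.

Lemma c12_of_cubic_disc_ge0 a b c : 3 * b <= a ^+ 2 -> 0 <= cubic_disc a b c ->
  c2 a b <= c <= c1 a b.
Proof.
move=> b_le; rewrite cubic_disc_c12 // => disc_ge0.
have c21 := c2_le_c1 a b; apply/andP; split; nra.
Qed.

Lemma two_cases_iff_interval a b c :
  (0 < b <= a ^+ 2 / 4 /\ c2 a b <= c < 0) \/
  (a ^+ 2 / 4 < b <= a ^+ 2 / 3 /\ c2 a b <= c /\ c <= c1 a b /\ c1 a b < 0) <->
  [/\ 0 < b, 3 * b <= a ^+ 2, c < 0 & c2 a b <= c <= c1 a b].
Proof.
have a2_ge0 := sqr_ge0 a; have c21 := c2_le_c1 a b.
split=> [[[/andP[b_gt0 b_le4] /andP[c2_le c_lt0]] | [/andP[b_gt4 b_le3] [c2_le [c_le c1_lt0]]]] |].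
- have b_le : 3 * b <= a ^+ 2 by lra.
  have c12_le0 : c1 a b * c2 a b <= 0.
    by rewrite c1_mul_c2 // pmulr_lle0 ?invr_gt0 // pmulr_rle0 ?exprn_gt0 //; lra.
  by split=> //; apply/andP; split=> //; nra.
- by split; [lra | lra | lra | apply/andP].
case=> b_gt0 b_le c_lt0 /andP[c2_le c_le].
have [b_le4 | b_gt4] := lerP b (a ^+ 2 / 4); [left | right].
  by split; apply/andP.
have c12_gt0 : 0 < c1 a b * c2 a b.
  by rewrite c1_mul_c2 // divr_gt0 // mulr_gt0 ?exprn_gt0 //; lra.
by split; [apply/andP; split => //; lra | do !split => //; nra].
Qed.

Lemma three_pos_roots_conditions a b c : three_pos_roots (cubic a b c) ->
  [/\ a < 0, 0 < b, 3 * b <= a ^+ 2, c < 0 & c2 a b <= c <= c1 a b].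
Proof.
case=> r1 [r2 [r3 [r1_gt0 r2_gt0 r3_gt0]]].
rewrite cubic_vieta => /cubic_inj [-> -> ->].
have b_le : 3 * (r1 * r2 + r1 * r3 + r2 * r3) <= (- (r1 + r2 + r3)) ^+ 2.
  by have := sqr_ge0 (r1 - r2); have := sqr_ge0 (r1 - r3); have := sqr_ge0 (r2 - r3); lra.
split=> //.
- lra.
- by have := mulr_gt0 r1_gt0 r2_gt0; have := mulr_gt0 r1_gt0 r3_gt0;
     have := mulr_gt0 r2_gt0 r3_gt0; lra.
- by rewrite oppr_lt0 !mulr_gt0.
by apply: c12_of_cubic_disc_ge0 => //; rewrite cubic_disc_vieta sqr_ge0.
Qed.

Lemma horner_cubic_crit a b c (s := Num.sqrt (a ^+ 2 - 3 * b)) : 3 * b <= a ^+ 2 ->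
  (cubic a b c).[(- a - s) / 3] = c - c2 a b /\ (cubic a b c).[(- a + s) / 3] = c - c1 a b.
Proof.
rewrite -subr_ge0 => D_ge0; rewrite /c1 /c2 !horner_cubic sqrtrX // {}/s.
move: (Num.sqrt _) (sqr_sqrtr D_ge0) => s s2.
have -> : b = (a ^+ 2 - s ^+ 2) / 3 by rewrite s2; field.
by split; field.
Qed.

Lemma cubic_factor a b c r : root (cubic a b c) r ->
  cubic a b c = ('X - r%:P) * ('X^2 + (a + r)%:P * 'X + (b + r * (a + r))%:P).
Proof.
rewrite rootE horner_cubic => /eqP root_r.
have -> : c = - (r ^+ 3 + a * r ^+ 2 + b * r) by lra.
by rewrite /cubic !(polyCN, polyCD, polyCM, rmorphXn); ring.
Qed.

Lemma cubic_split a b c r : root (cubic a b c) r ->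
  3 * r ^+ 2 + 2 * a * r + b <= a ^+ 2 - 3 * b ->
  exists u v, cubic a b c = ('X - u%:P) * ('X - v%:P) * ('X - r%:P).
Proof.
move=> /cubic_factor -> slope_le.
(* the cofactor has discriminant (a^2 - 3b) - (3r^2 + 2ar + b) *)
have [|u [v ->]] := quadratic_split (a + r) (b + r * (a + r)); first lra.
by exists u, v; rewrite mulrC.
Qed.

Lemma cubic_lt0_nonpos a b c x : a < 0 -> 0 < b -> c < 0 -> x <= 0 ->
  (cubic a b c).[x] < 0.
Proof.
move=> a_lt0 b_gt0 c_lt0 x_le0; rewrite horner_cubic.
have x3_le0 : x ^+ 3 <= 0 by rewrite exprS mulr_le0_ge0 ?sqr_ge0.
have ax2_le0 : a * x ^+ 2 <= 0 by rewrite mulr_le0_ge0 ?sqr_ge0 // ltW.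
have bx_le0 : b * x <= 0 by rewrite mulr_ge0_le0 // ltW.
lra.
Qed.

Lemma three_pos_roots_split a b c : a < 0 -> 0 < b -> c < 0 ->
  (exists u v w, cubic a b c = ('X - u%:P) * ('X - v%:P) * ('X - w%:P)) ->
  three_pos_roots (cubic a b c).
Proof.
move=> a_lt0 b_gt0 c_lt0 [u [v [w E]]]; exists u, v, w.
have root_gt0 z : root (cubic a b c) z -> 0 < z.
  rewrite rootE ltNge; apply: contraL => z_le0.
  by rewrite lt_eqF ?cubic_lt0_nonpos.
by split=> //; apply: root_gt0; rewrite E !rootM !root_XsubC eqxx ?orbT.
Qed.

Lemma conditions_three_pos_roots a b c : a < 0 -> 0 < b -> 3 * b <= a ^+ 2 -> c < 0 ->
  c2 a b <= c <= c1 a b -> three_pos_roots (cubic a b c).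
Proof.
move=> a_lt0 b_gt0 b_le c_lt0 /andP[c2_le c_le].
apply: three_pos_roots_split => //.
have [F_crit1 F_crit2] := horner_cubic_crit a b c b_le.
have D_ge0 : 0 <= a ^+ 2 - 3 * b by rewrite subr_ge0.
move: (Num.sqrt _) (sqrtr_ge0 (a ^+ 2 - 3 * b)) (sqr_sqrtr D_ge0) F_crit1 F_crit2
  => s s_ge0 s2 F_crit1 F_crit2.
have [r /andP[r_ge r_le]] :
    exists2 r, (- a - s) / 3 <= r <= (- a + s) / 3 & root (- cubic a b c) r.
  apply: poly_ivt; first lra.
  by rewrite !hornerN F_crit1 F_crit2; apply/andP; split; lra.
rewrite rootN => /cubic_split [|u [v E]]; last by exists u, v, r.
have -> : 3 * r ^+ 2 + 2 * a * r + b = 3 * (r - (- a - s) / 3) * (r - (- a + s) / 3).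
  have -> : b = (a ^+ 2 - s ^+ 2) / 3 by rewrite s2; field.
  by field.
nra.
Qed.

End Cubic.

Theorem mainTheorem5 (R : rcfType) (a b c : R) (hc : c != 0) :
  three_pos_roots (cubic a b c) <->
  a < 0 /\
  ((0 < b <= a ^+ 2 / 4 /\ c2 a b <= c < 0) \/
   (a ^+ 2 / 4 < b <= a ^+ 2 / 3 /\ c2 a b <= c /\ c <= c1 a b /\ c1 a b < 0)).
Proof.
(* [hc] is redundant: both sides force [c < 0]. *)
rewrite two_cases_iff_interval; split.
  by case/three_pos_roots_conditions.
by case=> a_lt0 [b_gt0 b_le c_lt0 c_in]; exact: conditions_three_pos_roots.
Qed.
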